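(* Let $A$ be a unital $C^*$-algebra and let $k>1$ be an integer. Suppose $e_1,\dots,e_k\in A$ are mutually orthogonal projections and $u\in U(A)$ is a unitary with $u^*e_iu=e_{i+1}$ for $i=1,\dots,k$, where $e_{k+1}=e_1$. Suppose $B$ is a finite dimensional $C^*$-subalgebra of $e_1Ae_1$ and $z\in U_0(e_1Ae_1)$ satisfies $z^*(u^k)^*bu^kz=b$ for all $b\in B$, and that $z=z_1z_2\cdots z_{k-1}$ with $z_i\in U(e_1Ae_1)$ for $i=1,\dots,k-1$; set $z_k=e_1$ (the unit of $e_1Ae_1$). Define $$w=\sum_{i=1}^k e_iu^{k+1-i}z_i(u^{k-i})^*+\Big(1-\sum_{i=1}^k e_i\Big)u.$$ Then $\|w-u\|\le\max\{\|z_i-e_1\|:1\le i\le k-1\}$, $(w^i)^*e_1w^i=e_{i+1}$ for $i=1,\dots,k-1$, and $(w^k)^*bw^k=b$ for all $b\in B$.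
   Context: $U(D)$ denotes the unitary group of a unital $C^*$-algebra $D$ and $U_0(D)$ the connected component of its identity; $e_1Ae_1$ is a unital $C^*$-algebra with unit $e_1$. *)

From mathcomp Require Import all_boot all_order all_algebra.
From mathcomp Require Import complex.
From mathcomp Require Import reals.
Set Implicit Arguments. Unset Strict Implicit. Unset Printing Implicit Defensive.
Import Order.TTheory GRing.Theory Num.Theory.
Local Open Scope ring_scope.

Definition is_unital_Cstar (R : realType) (A : algType R[i])
    (star : A -> A) (nrm : A -> R) : Prop :=
  [/\
    [/\ (forall a b, star (a + b) = star a + star b),
      (forall (c : R[i]) a, star (c *: a) = conjc c *: star a),
      (forall a b, star (a * b) = star b * star a) &
      (forall a, star (star a) = a)],
    [/\ (forall a, nrm a = 0 -> a = 0),
      (forall (c : R[i]) a, nrm (c *: a) = ComplexField.Normc.normc c * nrm a),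
      (forall a b, nrm (a + b) <= nrm a + nrm b) &
      (forall a b, nrm (a * b) <= nrm a * nrm b)] &
    [/\
      (forall a, nrm (star a * a) = nrm a ^+ 2),
      nrm 1 = 1 &
      (forall s : nat -> A,
        (forall eps : R, 0 < eps -> exists N : nat, forall m n : nat,
           (N <= m)%N -> (N <= n)%N -> nrm (s m - s n) < eps) ->
        exists l : A, forall eps : R, 0 < eps -> exists N : nat, forall n : nat,
           (N <= n)%N -> nrm (s n - l) < eps)]].

Definition unitary_el (R : realType) (A : algType R[i]) (star : A -> A) (x : A) :=
  star x * x = 1 /\ x * star x = 1.

Definition projection_el (R : realType) (A : algType R[i]) (star : A -> A) (p : A) :=
  p * p = p /\ star p = p.

Definition in_corner (R : realType) (A : algType R[i]) (e x : A) := e * x * e = x.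

(* U(eAe): unitaries of the unital C*-algebra eAe, whose unit is e *)
Definition unitary_corner (R : realType) (A : algType R[i]) (star : A -> A)
    (e x : A) :=
  in_corner e x /\ star x * x = e /\ x * star x = e.

Definition rel_open (R : realType) (A : algType R[i]) (nrm : A -> R)
    (S O : A -> Prop) :=
  forall x, S x -> O x -> exists2 eps : R, 0 < eps &
    forall y, S y -> nrm (y - x) < eps -> O y.

Definition connected_subset (R : realType) (A : algType R[i]) (nrm : A -> R)
    (S : A -> Prop) :=
  forall O1 O2 : A -> Prop, rel_open nrm S O1 -> rel_open nrm S O2 ->
    (forall x, S x -> O1 x \/ O2 x) ->
    (forall x, S x -> O1 x -> O2 x -> False) ->
    (forall x, S x -> O1 x) \/ (forall x, S x -> O2 x).

(* U_0(eAe): the connected component of the unit e in U(eAe), i.e. the union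
   of all connected subsets of U(eAe) containing e *)
Definition unitary0_corner (R : realType) (A : algType R[i]) (star : A -> A)
    (nrm : A -> R) (e z : A) :=
  exists S : A -> Prop, [/\ (forall x, S x -> unitary_corner star e x),
    S e, S z & connected_subset nrm S].

Definition fd_Cstar_subalg_corner (R : realType) (A : algType R[i])
    (star : A -> A) (nrm : A -> R) (e : A) (B : A -> Prop) :=
  [/\ [/\ B 0,
      (forall a b, B a -> B b -> B (a + b)),
      (forall (c : R[i]) a, B a -> B (c *: a)),
      (forall a b, B a -> B b -> B (a * b)) &
      (forall a, B a -> B (star a))],
      (forall a, B a -> in_corner e a),
      (forall (s : nat -> A) (l : A), (forall n, B (s n)) ->
         (forall eps : R, 0 < eps -> exists N : nat, forall n : nat,
            (N <= n)%N -> nrm (s n - l) < eps) -> B l) &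
      (exists s : seq A, (forall x, x \in s -> B x) /\
         forall b, B b -> exists c : nat -> R[i],
           b = \sum_(i < size s) c i *: s`_i)].

From mathcomp Require Import all_boot all_order all_algebra.
From mathcomp Require Import complex reals.
From mathcomp Require Import lra zify.

Set Implicit Arguments.
Unset Strict Implicit.
Unset Printing Implicit Defensive.

Import Order.TTheory GRing.Theory Num.Theory.
Local Open Scope ring_scope.

(* Each corner piece of w is explicit: u^(k+1-j) conjugates e_j onto e_1 and
   z_j lies in e_1 A e_1, so e_j w = u^(k+1-j) z_j u^*(k-j).  Hence
   w^* e_j w = e_(j+1), and by induction e_1 w^n = u^k z_1...z_n u^*(k-n); in
   particular e_1 w^k = u^k z, which transfers the identity for B from u^k z
   to w^k.  Moreover w - u = u * sum_(i<k) u^(k-i) (z_i - e_1) u^*(k-i) is a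
   sum of elements of the mutually orthogonal corners e_(i+1) A e_(i+1), and
   the norm of such a sum is at most the largest norm of its terms. *)

Lemma bernoulli_ler (R : realDomainType) (x : R) n :
  0 <= x -> 1 + n%:R * x <= (1 + x) ^+ n.
Proof.
move=> x_ge0; elim: n => [|n IH]; first by rewrite mul0r addr0 expr0.
rewrite exprSr -natr1.
have nx2_ge0 : 0 <= n%:R * (x * x) :> R by rewrite mulr_ge0 ?mulr_ge0.
apply: le_trans (_ : (1 + n%:R * x) * (1 + x) <= _); first by nra.
by rewrite ler_wpM2r // addr_ge0.
Qed.

Lemma le_of_exp2n_le (R : archiRealFieldType) (a b : R) (m : nat) :
  0 <= a -> 0 <= b -> (forall n, a ^+ (2 ^ n) <= m%:R * b ^+ (2 ^ n)) ->
  a <= b.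
Proof.
move=> a_ge0 b_ge0 le_ab; rewrite leNgt; apply/negP => lt_ba.
have b_gt0 : 0 < b.
  rewrite lt_def b_ge0 andbT; apply/eqP => b0.
  by have := le_ab 0%N; rewrite expn0 !expr1 b0 mulr0; lra.
have t_gt0 : 0 < a / b - 1 by rewrite subr_gt0 ltr_pdivlMr // mul1r.
pose n := Num.Def.archi_bound (m%:R / (a / b - 1)).
have m_lt : m%:R < (2 ^ n)%:R * (a / b - 1).
  have n_ge : m%:R / (a / b - 1) < n%:R.
    by apply: archi_boundP; rewrite divr_ge0 // ltW.
  rewrite -ltr_pdivrMr //; apply: lt_trans n_ge _.
  by rewrite ltr_nat ltn_expl.
have := bernoulli_ler (2 ^ n) (ltW t_gt0); rewrite [1 + (_ - 1)]addrC subrK.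
have : (a / b) ^+ (2 ^ n) <= m%:R.
  by rewrite expr_div_n ler_pdivrMr ?exprn_gt0.
lra.
Qed.

Section OrthogonalSums.
Variables (A : pzSemiRingType) (I : eqType).

Lemma mulr_sum_orthogonal (r : seq I) (a b : I -> A) : uniq r ->
  {in r &, forall i j, i != j -> a i * b j = 0} ->
  (\sum_(i <- r) a i) * (\sum_(j <- r) b j) = \sum_(i <- r) a i * b i.
Proof.
move=> r_uniq ab0; rewrite mulr_suml; apply: eq_big_seq => i ri.
rewrite mulr_sumr (bigD1_seq i) //= big1_seq ?addr0 // => j /andP[ji rj].
by apply: ab0; rewrite // eq_sym.
Qed.

Lemma expr_sum_orthogonal (r : seq I) (h : I -> A) n : uniq r ->
  {in r &, forall i j, i != j -> h i * h j = 0} -> (0 < n)%N ->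
  (\sum_(i <- r) h i) ^+ n = \sum_(i <- r) h i ^+ n.
Proof.
move=> r_uniq h0; case: n => // n _; elim: n => [|n IH].
  by rewrite expr1; apply: eq_bigr => i _; rewrite expr1.
rewrite exprSr IH mulr_sum_orthogonal //.
  by apply: eq_bigr => i _; rewrite -exprSr.
by move=> i j ri rj ij; rewrite exprSr -mulrA h0 // mulr0.
Qed.

End OrthogonalSums.

Section CstarAlgebra.
Variables (R : realType) (A : algType R[i]) (star : A -> A) (nrm : A -> R).
Hypothesis starD : forall a b, star (a + b) = star a + star b.
Hypothesis starM : forall a b, star (a * b) = star b * star a.
Hypothesis starK : forall a, star (star a) = a.
Hypothesis nrmZ : forall (c : R[i]) a,
  nrm (c *: a) = ComplexField.Normc.normc c * nrm a.
Hypothesis nrmD : forall a b, nrm (a + b) <= nrm a + nrm b.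
Hypothesis nrmM : forall a b, nrm (a * b) <= nrm a * nrm b.
Hypothesis nrmC : forall a, nrm (star a * a) = nrm a ^+ 2.
Hypothesis nrm1 : nrm 1 = 1.

Lemma star0 : star 0 = 0.
Proof.
have star00 := starD 0 0; rewrite addr0 in star00.
by apply: (addrI (star 0)); rewrite addr0 -star00.
Qed.

Lemma star1 : star 1 = 1.
Proof. by have := starM 1 (star 1); rewrite mul1r starK mul1r. Qed.

Lemma star_sum (I : Type) (r : seq I) (F : I -> A) :
  star (\sum_(i <- r) F i) = \sum_(i <- r) star (F i).
Proof. exact: (big_morph star starD star0). Qed.

Lemma starX x n : star (x ^+ n) = star x ^+ n.
Proof.
elim: n => [|n IH]; first by rewrite !expr0 star1.
by rewrite exprS starM IH exprSr.
Qed.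

Lemma unitary_elX V n : unitary_el star V -> unitary_el star (V ^+ n).
Proof.
case=> VV1 V1V; rewrite /unitary_el starX.
by rewrite -!exprMn_comm ?VV1 ?V1V ?expr1n // /GRing.comm VV1 V1V.
Qed.

Lemma unitary_conj V a b : unitary_el star V -> star V * a * V = b ->
  [/\ a * V = V * b, star V * a = b * star V & V * b * star V = a].
Proof.
case=> VV1 V1V <-; split; first by rewrite !mulrA V1V mul1r.
  by rewrite -!mulrA V1V mulr1.
by rewrite !mulrA V1V mul1r -mulrA V1V mulr1.
Qed.

Lemma unitary_el_star V : unitary_el star V -> unitary_el star (star V).
Proof. by case=> VV1 V1V; split; rewrite starK. Qed.

Lemma in_corner_conj V p x : unitary_el star V -> in_corner p x ->
  in_corner (V * p * star V) (V * x * star V).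
Proof.
case=> VV1 _ px; rewrite /in_corner !mulrA -(mulrA _ (star V) V) VV1 mulr1.
by rewrite -(mulrA _ (star V) V) VV1 mulr1 -(mulrA V p x) -(mulrA V) px.
Qed.

Lemma corner_orthogonal p q x y :
  projection_el star p -> projection_el star q -> p * q = 0 ->
  in_corner p x -> in_corner q y -> star x * y = 0 /\ x * star y = 0.
Proof.
move=> [_ p_sa] [_ q_sa] pq0 <- <-; rewrite !starM p_sa q_sa !mulrA.
by split; rewrite -(mulrA _ p q) pq0 mulr0 !mul0r.
Qed.

Lemma nrm0 : nrm 0 = 0.
Proof.
by rewrite -(scale0r (0 : A)) nrmZ ComplexField.Normc.normc0 mul0r.
Qed.

Lemma nrm_ge0 x : 0 <= nrm x.
Proof.
have := nrmD x (- x); rewrite subrr nrm0 -scaleN1r nrmZ.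
by rewrite (normcN (1 : R[i])) ComplexField.Normc.normc1 mul1r; lra.
Qed.

Lemma nrm_sum (I : Type) (r : seq I) (F : I -> A) :
  nrm (\sum_(i <- r) F i) <= \sum_(i <- r) nrm (F i).
Proof.
elim: r => [|i r IH]; first by rewrite !big_nil nrm0.
by rewrite !big_cons; apply: le_trans (nrmD _ _) _; rewrite lerD2l.
Qed.

Lemma nrm_unitary V : unitary_el star V -> nrm V = 1.
Proof.
case=> VV1 _; have /eqP := nrmC V; rewrite VV1 nrm1 eq_sym sqrf_eq1.
by case/orP=> /eqP // V_1; have := nrm_ge0 V; rewrite V_1; lra.
Qed.

Lemma nrm_expr2n_selfadjoint y n :
  star y = y -> nrm (y ^+ (2 ^ n)) = nrm y ^+ (2 ^ n).
Proof.
move=> y_sa; elim: n => [|n IH]; first by rewrite expn0 !expr1.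
by rewrite expnSr !exprM -IH -nrmC starX y_sa expr2.
Qed.

(* Without spectral theory: [H := x^* x] is a sum of pairwise orthogonal
   self-adjoint [h_i], so [|H|^(2^n) = |H^(2^n)| <= size r * (c^2)^(2^n)] for
   every [n], whence [|H| <= c^2]. *)
Lemma nrm_sum_orthogonal (I : eqType) (r : seq I) (d : I -> A) (c : R) :
  uniq r -> 0 <= c ->
  {in r &, forall i j, i != j -> star (d i) * d j = 0 /\ d i * star (d j) = 0} ->
  {in r, forall i, nrm (d i) <= c} ->
  nrm (\sum_(i <- r) d i) <= c.
Proof.
move=> r_uniq c_ge0 d_orth d_le.
pose h i := star (d i) * d i.
have h_sa i : star (h i) = h i by rewrite /h starM starK.
have h_orth : {in r &, forall i j, i != j -> h i * h j = 0}.
  move=> i j ri rj ij; rewrite /h mulrA -(mulrA _ (d i)).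
  by rewrite (d_orth i j ri rj ij).2 mulr0 mul0r.
set x := \sum_(i <- r) d i.
have xx : star x * x = \sum_(i <- r) h i.
  rewrite star_sum mulr_sum_orthogonal // => i j ri rj ij.
  exact: (d_orth i j ri rj ij).1.
suff : nrm (star x * x) <= c ^+ 2.
  by rewrite nrmC ler_pXn2r // nnegrE nrm_ge0.
apply: (@le_of_exp2n_le _ _ _ (size r)); rewrite ?nrm_ge0 ?exprn_ge0 // => n.
rewrite -nrm_expr2n_selfadjoint ?starM ?starK // xx.
rewrite expr_sum_orthogonal ?expn_gt0 //; apply: le_trans (nrm_sum _ _) _.
apply: le_trans (_ : \sum_(i <- r) (c ^+ 2) ^+ (2 ^ n) <= _); last first.
  by rewrite big_const_seq count_predT iter_addr_0 mulr_natl.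
rewrite !big_seq; apply: ler_sum => i ri.
rewrite nrm_expr2n_selfadjoint // nrmC.
rewrite lerXn2r ?nnegrE ?exprn_ge0 ?nrm_ge0 //.
by rewrite lerXn2r ?nnegrE ?nrm_ge0 ?d_le.
Qed.

Section TwistedUnitary.
Variables (k : nat) (e : nat -> A) (u : A) (zz : nat -> A).
Hypothesis k_gt0 : (0 < k)%N.
Hypothesis e_proj : forall i, (1 <= i <= k)%N -> projection_el star (e i).
Hypothesis e_orth : forall i j, (1 <= i <= k)%N -> (1 <= j <= k)%N -> i <> j ->
  e i * e j = 0.
Hypothesis u_unitary : unitary_el star u.
Hypothesis u_shift : forall i, (1 <= i < k)%N -> star u * e i * u = e i.+1.
Hypothesis u_shift_last : star u * e k * u = e 1%N.
Hypothesis zz_unitary : forall i, (1 <= i < k)%N ->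
  unitary_corner star (e 1%N) (zz i).
Hypothesis zz_last : zz k = e 1%N.

Definition twisted :=
  \sum_(1 <= i < k.+1) e i * u ^+ (k + 1 - i) * zz i * star (u ^+ (k - i))
  + (1 - \sum_(1 <= i < k.+1) e i) * u.

Definition twist_defect i :=
  u ^+ (k - i) * (zz i - e 1%N) * star (u ^+ (k - i)).

Definition zz_prod n := e 1%N * \prod_(1 <= i < n.+1) zz i.

Lemma e1_proj : projection_el star (e 1%N).
Proof. exact: e_proj. Qed.

Lemma unitary_upow m : unitary_el star (u ^+ m).
Proof. exact: unitary_elX. Qed.

Lemma conj_upow_e m j : (1 <= j)%N -> (j + m <= k)%N ->
  star (u ^+ m) * e j * u ^+ m = e (j + m).
Proof.
move=> j_ge1; elim: m => [|m IH] jm_le.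
  by rewrite expr0 star1 mul1r mulr1 addn0.
have -> : star (u ^+ m.+1) * e j * u ^+ m.+1
    = star u * (star (u ^+ m) * e j * u ^+ m) * u.
  by rewrite exprSr starM !mulrA.
by rewrite IH ?addnS ?u_shift //; lia.
Qed.

Lemma conj_upow_e_wrap j : (1 <= j <= k)%N ->
  star (u ^+ (k + 1 - j)) * e j * u ^+ (k + 1 - j) = e 1%N.
Proof.
move=> /andP[j_ge1 j_le]; rewrite addn1 subSn //.
have -> : star (u ^+ (k - j).+1) * e j * u ^+ (k - j).+1
    = star u * (star (u ^+ (k - j)) * e j * u ^+ (k - j)) * u.
  by rewrite exprSr starM !mulrA.
by rewrite conj_upow_e ?subnKC.
Qed.

Lemma conj_upow_e_succ j : (j < k)%N ->
  star (u ^+ (k - j)) * e j.+1 * u ^+ (k - j) = e 1%N.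
Proof.
by move=> jk; have := @conj_upow_e_wrap j.+1; rewrite addn1 subSS; apply.
Qed.

Lemma upow_e1_conj j : (j < k)%N ->
  u ^+ (k - j) * e 1%N * star (u ^+ (k - j)) = e j.+1.
Proof.
by move=> jk; have [] := unitary_conj (unitary_upow _) (conj_upow_e_succ jk).
Qed.

Lemma e_mul_upow j : (1 <= j <= k)%N ->
  e j * u ^+ (k + 1 - j) = u ^+ (k + 1 - j) * e 1%N.
Proof.
by move=> hj; have [] := unitary_conj (unitary_upow _) (conj_upow_e_wrap hj).
Qed.

Lemma e_mul_u j : (1 <= j <= k)%N ->
  e j * u = u ^+ (k + 1 - j) * e 1%N * star (u ^+ (k - j)).
Proof.
move=> /[dup] hj /andP[_ j_le]; rewrite -e_mul_upow // addn1 subSn // exprS.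
by rewrite -!mulrA (unitary_upow _).2 mulr1.
Qed.

Lemma zz_corner j : (1 <= j <= k)%N ->
  [/\ e 1%N * zz j = zz j, zz j * e 1%N = zz j & star (zz j) * zz j = e 1%N].
Proof.
have [e1_idem e1_sa] := e1_proj.
move=> /andP[j_ge1]; rewrite leq_eqVlt => /orP[/eqP ->|jk].
  by rewrite zz_last e1_sa e1_idem.
have [zz_in [zz_unit _]] := zz_unitary (introT andP (conj j_ge1 jk)).
by split; rewrite // -zz_in; [rewrite !mulrA e1_idem | rewrite -!mulrA e1_idem].
Qed.

Lemma in_corner_zz_sub j : (1 <= j <= k)%N -> in_corner (e 1%N) (zz j - e 1%N).
Proof.
have [e1_idem _] := e1_proj; move=> /zz_corner[zz_l zz_r _].
by rewrite /in_corner mulrBr zz_l e1_idem mulrBl zz_r e1_idem.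
Qed.

Lemma e_mul_sum j (F : nat -> A) : (1 <= j <= k)%N ->
  e j * (\sum_(1 <= i < k.+1) e i * F i) = e j * F j.
Proof.
move=> hj; rewrite mulr_sumr (bigD1_seq j) ?mem_index_iota ?iota_uniq //=.
rewrite big1_seq ?addr0 ?mulrA ?(e_proj hj).1 // => i /andP[ij].
rewrite mem_index_iota => hi; rewrite mulrA e_orth ?mul0r //.
by move/eqP: ij; apply: contra_not => ->.
Qed.

Lemma e_mul_sum_compl j : (1 <= j <= k)%N ->
  e j * (1 - \sum_(1 <= i < k.+1) e i) = 0.
Proof.
move=> hj; rewrite mulrBr mulr1.
rewrite -[X in _ * X](eq_bigr _ (fun i _ => mulr1 (e i))) e_mul_sum //.
by rewrite mulr1 subrr.
Qed.

Lemma e_mul_twist_term j : (1 <= j <= k)%N ->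
  e j * u ^+ (k + 1 - j) * zz j = u ^+ (k + 1 - j) * zz j.
Proof.
by move=> /[dup] hj /zz_corner[zz_l _ _]; rewrite e_mul_upow // -mulrA zz_l.
Qed.

Lemma e_mul_twisted j : (1 <= j <= k)%N ->
  e j * twisted = u ^+ (k + 1 - j) * zz j * star (u ^+ (k - j)).
Proof.
move=> hj; rewrite /twisted mulrDr mulrA e_mul_sum_compl // mul0r addr0.
under eq_bigr do rewrite -!mulrA.
by rewrite e_mul_sum // !mulrA e_mul_twist_term.
Qed.

Lemma twisted_conj_e j : (1 <= j < k)%N ->
  star twisted * e j * twisted = e j.+1.
Proof.
move=> /andP[j_ge1 jk]; have hj : (1 <= j <= k)%N by rewrite j_ge1 ltnW.
have [e_idem e_sa] := e_proj hj; have [_ _ zz_unit] := zz_corner hj.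
have -> : star twisted * e j * twisted = star (e j * twisted) * (e j * twisted).
  by rewrite starM e_sa !mulrA -(mulrA _ (e j) (e j)) e_idem.
rewrite e_mul_twisted // !starM starK !mulrA -(mulrA _ (star _) (u ^+ _)).
rewrite (unitary_upow _).1 mulr1 -(mulrA _ (star (zz j))) zz_unit.
exact: upow_e1_conj.
Qed.

Lemma twisted_expr_conj_e1 i : (i < k)%N ->
  star (twisted ^+ i) * e 1%N * twisted ^+ i = e i.+1.
Proof.
elim: i => [|i IH] ik; first by rewrite expr0 star1 mul1r mulr1.
have -> : star (twisted ^+ i.+1) * e 1%N * twisted ^+ i.+1
    = star twisted * (star (twisted ^+ i) * e 1%N * twisted ^+ i) * twisted.
  by rewrite exprSr starM !mulrA.
by rewrite IH ?twisted_conj_e // ltnW.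
Qed.

Lemma zz_prod_e1 n : (n <= k)%N -> zz_prod n * e 1%N = zz_prod n.
Proof.
case: n => [|n] nk; first by rewrite /zz_prod big_geq // mulr1 e1_proj.1.
have [_ zz_r _] := @zz_corner n.+1 nk.
by rewrite /zz_prod big_nat_recr //= -!mulrA zz_r.
Qed.

Lemma e1_mul_twisted_expr n : (n <= k)%N ->
  e 1%N * twisted ^+ n = u ^+ k * zz_prod n * star (u ^+ (k - n)).
Proof.
elim: n => [|n IH] nk.
  rewrite expr0 mulr1 /zz_prod big_geq // mulr1.
  by have := upow_e1_conj k_gt0; rewrite subn0 => ->.
have [_ e_shift _] := unitary_conj (unitary_upow (k - n)) (conj_upow_e_succ nk).
rewrite exprSr mulrA (IH (ltnW nk)).
have -> : zz_prod n.+1 = zz_prod n * zz n.+1.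
  by rewrite /zz_prod big_nat_recr //= mulrA.
have := zz_prod_e1 (ltnW nk); move: (zz_prod n) => P P_e1.
rewrite -{1}P_e1 !mulrA -(mulrA _ (e 1%N)) -e_shift !mulrA -(mulrA _ (e n.+1)).
rewrite e_mul_twisted //.
by rewrite addn1 subSS !mulrA -(mulrA _ (star _)) (unitary_upow _).1 mulr1.
Qed.

Lemma e1_mul_twisted_exprk :
  e 1%N * twisted ^+ k = u ^+ k * (e 1%N * \prod_(1 <= i < k) zz i * e 1%N).
Proof.
rewrite e1_mul_twisted_expr // subnn expr0 star1 mulr1 /zz_prod.
by rewrite big_nat_recr //= zz_last !mulrA.
Qed.

Lemma e_mul_twist_sub_u j : (1 <= j <= k)%N ->
  e j * u ^+ (k + 1 - j) * zz j * star (u ^+ (k - j)) - e j * u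
  = u * twist_defect j.
Proof.
move=> /[dup] hj /andP[_ j_le]; rewrite e_mul_twist_term // e_mul_u //.
by rewrite -mulrBl -mulrBr addn1 subSn // exprS /twist_defect !mulrA.
Qed.

Lemma twisted_sub_u : twisted - u = u * \sum_(1 <= i < k) twist_defect i.
Proof.
have -> : twisted - u = \sum_(1 <= i < k.+1) u * twist_defect i.
  rewrite -(eq_big_nat _ _ (fun i (hi : (1 <= i < k.+1)%N) =>
    e_mul_twist_sub_u hi)).
  by rewrite sumrB -mulr_suml /twisted mulrBl mul1r addrA addrAC addrK.
rewrite -mulr_sumr big_nat_recr //=.
by rewrite /twist_defect zz_last subrr mulr0 mul0r addr0.
Qed.

Lemma twist_defect_corner i : (1 <= i < k)%N ->
  in_corner (e i.+1) (twist_defect i).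
Proof.
move=> /andP[i_ge1 ik]; rewrite -upow_e1_conj //.
apply: in_corner_conj; first exact: unitary_upow.
by apply: in_corner_zz_sub; rewrite i_ge1 ltnW.
Qed.

Lemma nrm_twist_defect i : nrm (twist_defect i) <= nrm (zz i - e 1%N).
Proof.
rewrite /twist_defect; apply: le_trans (nrmM _ _) _.
rewrite (nrm_unitary (unitary_el_star (unitary_upow _))) mulr1.
by apply: le_trans (nrmM _ _) _; rewrite (nrm_unitary (unitary_upow _)) mul1r.
Qed.

Lemma nrm_twisted_sub_u :
  nrm (twisted - u) <= \big[Num.max/0]_(1 <= i < k) nrm (zz i - e 1%N).
Proof.
rewrite twisted_sub_u; apply: le_trans (nrmM _ _) _.
rewrite (nrm_unitary u_unitary) mul1r; apply: nrm_sum_orthogonal.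
- exact: iota_uniq.
- exact: bigmax_ge_id.
- move=> i j; rewrite !mem_index_iota => hi hj ij.
  apply: corner_orthogonal (twist_defect_corner hi) (twist_defect_corner hj).
  + by apply: e_proj; lia.
  + by apply: e_proj; lia.
  + by apply: e_orth; lia.
- by move=> i ri; apply: le_trans (nrm_twist_defect i) _; exact: le_bigmax_seq.
Qed.

Lemma twisted_exprk_conj z b : z = \prod_(1 <= i < k) zz i ->
  in_corner (e 1%N) z -> in_corner (e 1%N) b ->
  star (twisted ^+ k) * b * twisted ^+ k
  = star z * star (u ^+ k) * b * u ^+ k * z.
Proof.
move=> z_prod z_corner b_corner; rewrite -{1}b_corner.
have -> : star (twisted ^+ k) * (e 1%N * b * e 1%N) * twisted ^+ k
    = star (e 1%N * twisted ^+ k) * b * (e 1%N * twisted ^+ k).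
  by rewrite starM e1_proj.2 !mulrA.
by rewrite e1_mul_twisted_exprk -z_prod z_corner starM !mulrA.
Qed.

End TwistedUnitary.

End CstarAlgebra.

Theorem lemma2p12 (R : realType) (A : algType R[i]) (star : A -> A)
    (nrm : A -> R) (HA : is_unital_Cstar star nrm)
    (k : nat) (hk : (1 < k)%N)
    (e : nat -> A) (u : A) (B : A -> Prop) (z : A) (zz : nat -> A)
    (he_proj : forall i, (1 <= i <= k)%N -> projection_el star (e i))
    (he_orth : forall i j, (1 <= i <= k)%N -> (1 <= j <= k)%N -> i <> j ->
                 e i * e j = 0)
    (hu : unitary_el star u)
    (hue : forall i, (1 <= i < k)%N -> star u * e i * u = e i.+1)
    (huek : star u * e k * u = e 1%N)
    (hB : fd_Cstar_subalg_corner star nrm (e 1%N) B)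
    (hz0 : unitary0_corner star nrm (e 1%N) z)
    (hzB : forall b, B b -> star z * star (u ^+ k) * b * u ^+ k * z = b)
    (hzprod : z = \prod_(1 <= i < k) zz i)
    (hzz : forall i, (1 <= i < k)%N -> unitary_corner star (e 1%N) (zz i))
    (hzk : zz k = e 1%N) :
  let w := \sum_(1 <= i < k.+1)
              e i * u ^+ (k + 1 - i) * zz i * star (u ^+ (k - i))
           + (1 - \sum_(1 <= i < k.+1) e i) * u in
  [/\ nrm (w - u) <= \big[Num.max/0]_(1 <= i < k) nrm (zz i - e 1%N),
      (forall i, (1 <= i <= k - 1)%N -> star (w ^+ i) * e 1%N * w ^+ i = e i.+1)
    & (forall b, B b -> star (w ^+ k) * b * w ^+ k = b)].
Proof.
have [[starD _ starM starK] [_ nrmZ nrmD nrmM] [nrmC nrm1 _]] := HA.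
(* From [hB] and [hz0] only the facts that [B] and [z] lie in [e_1 A e_1]
   are used. *)
have [_ B_corner _ _] := hB.
have z_corner : in_corner (e 1%N) z.
  by case: hz0 => S [S_unitary _ Sz _]; have [] := S_unitary z Sz.
have k_gt0 := ltnW hk.
move=> w; split.
- exact: (nrm_twisted_sub_u starD starM starK nrmZ nrmD nrmM nrmC nrm1
    k_gt0 he_proj he_orth hu hue huek hzz hzk).
- move=> i /andP[_ i_le].
  apply: (twisted_expr_conj_e1 starM starK k_gt0 he_proj he_orth hu hue huek
    hzz hzk); lia.
- move=> b Bb; rewrite (twisted_exprk_conj starM starK k_gt0 he_proj he_orth hu
    hue huek hzz hzk hzprod z_corner (B_corner b Bb)).
  exact: hzB.
Qed.
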